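(* Consider a cellular network with $n$ base stations $\mathcal{N}=\{1,\dots,n\}$, base station $i$ serving a nonempty set $\mathcal{J}_i$ of users (pairwise disjoint), channel gains $g_{kj}>0$, noise power $\sigma^2>0$, and $$f_i(\mathbf{x};\mathbf{r},\mathbf{p})=\sum_{j\in\mathcal{J}_i}\frac{r_{ij}}{\log\Big(1+\frac{p_i g_{ij}}{\sum_{k\ne i} p_k g_{kj} x_k+\sigma^2}\Big)}.$$ Fix a satisfiable rate vector $\mathbf{r}>\mathbf{0}$. Consider two load vectors $\mathbf{x},\mathbf{x}'>\mathbf{0}$ with $\mathbf{x}'\ge\mathbf{x}$ and $\mathbf{x}'\ne\mathbf{x}$. If $\mathbf{x}$ is implementable, then $\mathbf{x}'$ is implementable. Moreover, the respective corresponding power vectors $\mathbf{p}$ and $\mathbf{p}'$ (i.e., $\mathbf{x}=\mathbf{f}(\mathbf{x};\mathbf{r},\mathbf{p})$ and $\mathbf{x}'=\mathbf{f}(\mathbf{x}';\mathbf{r},\mathbf{p}')$) satisfy $\mathbf{p}'<\mathbf{p}$ componentwise.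
   Context: Vector inequalities are componentwise; $\log$ is natural logarithm. A rate vector $\mathbf{r}$ is satisfiable if $\rho(\mathbf{\Lambda}(\mathbf{r}))<1$, where $\rho$ is the spectral radius and $\mathbf{\Lambda}(\mathbf{r})$ has entries $\lambda_{ii}=0$ and $\lambda_{ik}=\sum_{j\in\mathcal{J}_i}g_{kj}r_{ij}/g_{ij}$ for $i\ne k$. Given satisfiable $\mathbf{r}$, a load $\mathbf{x}>\mathbf{0}$ is implementable if there exists $\mathbf{p}>\mathbf{0}$ with $\mathbf{x}=\mathbf{f}(\mathbf{x};\mathbf{r},\mathbf{p})$; for given $\mathbf{x}$ and $\mathbf{r}$ such a power vector is unique. *)

From HB Require Import structures.
From mathcomp Require Import all_boot all_order all_algebra.
From mathcomp Require Import complex.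
From mathcomp Require Import reals exp.
Set Implicit Arguments. Unset Strict Implicit. Unset Printing Implicit Defensive.
Import Order.TTheory GRing.Theory Num.Theory.
Local Open Scope ring_scope.
Local Open Scope complex_scope.

Section Net.
Variables (R : realType) (n m : nat).
(* base stations 'I_n, users 'I_m, J i = set of users served by BS i,
   g k j = gain from BS k to user j, sigma2 = noise power. *)
Variables (J : 'I_n -> {set 'I_m}) (g : 'I_n -> 'I_m -> R) (sigma2 : R).

Definition Lambda (r : 'I_n -> 'I_m -> R) : 'M[R]_n :=
  \matrix_(i, k) (if i == k then 0
                  else \sum_(j in J i) g k j * r i j / g i j).

Definition spectral_radius_lt1 (A : 'M[R]_n) : Prop :=
  forall z : R[i], root (map_poly (fun a : R => a%:C) (char_poly A)) z ->
    `|z| < 1.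

Definition satisfiable (r : 'I_n -> 'I_m -> R) : Prop :=
  spectral_radius_lt1 (Lambda r).

Definition f (x : 'I_n -> R) (r : 'I_n -> 'I_m -> R) (p : 'I_n -> R)
    (i : 'I_n) : R :=
  \sum_(j in J i)
     r i j / ln (1 + p i * g i j /
                  (\sum_(k < n | k != i) p k * g k j * x k + sigma2)).

Definition implementable_with (x : 'I_n -> R) (r : 'I_n -> 'I_m -> R)
    (p : 'I_n -> R) : Prop :=
  (forall i, 0 < p i) /\ (forall i, x i = f x r p i).

Definition implementable (x : 'I_n -> R) (r : 'I_n -> 'I_m -> R) : Prop :=
  exists p, implementable_with x r p.
End Net.

(* Scaling each power p_k by x_k / x'_k leaves every received power p_k x_k,
   hence every interference term, unchanged; by concavity of ln (1 + .) the
   loads it induces under x' are then at most x', strictly where x_k < x'_k.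
   Such a power vector q with f(x'; r, q) <= x' gives a fixed point by a
   Knaster-Tarski argument on the monotone best-response map, and it dominates
   every fixed point p: if a = p_i / q_i > 1 is the largest ratio, then p <= a q
   with equality at i, so station i has higher SINRs under p than under q
   because the noise does not scale, and thus a smaller load, which
   contradicts f(x; r, q)_i <= x_i = f(x; r, p)_i. Strictness then follows by
   comparing interference. *)

(* Imported before the core libraries so that [set0] denotes [finset.set0]. *)
From mathcomp Require Import boolp classical_sets topology normedtype sequences.
From HB Require Import structures.
From mathcomp Require Import all_boot all_order all_algebra.
From mathcomp Require Import complex.
From mathcomp Require Import reals exp.
From mathcomp Require Import ring lra.
Import Order.TTheory GRing.Theory Num.Theory numFieldNormedType.Exports.
Local Open Scope ring_scope.
Set Implicit Arguments.
Unset Strict Implicit.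

Section LnFacts.
Variable R : realType.
Implicit Types s t y : R.

Lemma ln1D_gt0 s : 0 < s -> 0 < ln (1 + s).
Proof. by move=> s_gt0; rewrite ln_gt0 // ltrDl. Qed.

Lemma ln_le_subr1 y : 0 < y -> ln y <= y - 1.
Proof.
move=> y_gt0; have := @le_ln1Dx R (y - 1); rewrite addrCA subrr addr0; apply.
by rewrite ltrBrDr addNr.
Qed.

Lemma ln_lt_subr1 y : 0 < y -> y != 1 -> ln y < y - 1.
Proof.
move=> y_gt0 y_neq1; rewrite -ltr_expR lnK ?posrE //.
by have := @expR_gt1Dx R (y - 1); rewrite addrCA subrr addr0; apply; rewrite subr_eq0.
Qed.

(* Weighted sum of [ln y <= y - 1] at [y = (1 + s) / c] and [y = 1 / c], with
   [c = 1 + t s]: the right-hand sides cancel. *)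
Lemma ln1D_concave_lt t s : 0 < t < 1 -> 0 < s -> t * ln (1 + s) < ln (1 + t * s).
Proof.
move=> /andP[t_gt0 t_lt1] s_gt0; set c := 1 + t * s.
have c_gt0 : 0 < c by rewrite addr_gt0 ?mulr_gt0.
have hS : ln ((1 + s) / c) < (1 + s) / c - 1.
  apply: ln_lt_subr1; first by rewrite divr_gt0 // addr_gt0.
  by rewrite gt_eqF // ltr_pdivlMr // mul1r /c; nra.
have h1 : ln c^-1 <= c^-1 - 1 by rewrite ln_le_subr1 ?invr_gt0.
rewrite ln_div ?posrE ?addr_gt0 ?mulr_gt0 // in hS; rewrite lnV ?posrE // in h1.
have hS' : t * (ln (1 + s) - ln c) < t * ((1 + s) / c - 1) by rewrite ltr_pM2l.
have h1' : (1 - t) * - ln c <= (1 - t) * (c^-1 - 1).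
  by rewrite ler_wpM2l // subr_ge0 ltW.
have : t * ((1 + s) / c - 1) + (1 - t) * (c^-1 - 1) = 0.
  by rewrite /c; field; rewrite -/c lt0r_neq0.
lra.
Qed.

Lemma ln1D_concave_le t s : 0 < t <= 1 -> 0 < s -> t * ln (1 + s) <= ln (1 + t * s).
Proof.
move=> /andP[t_gt0]; rewrite le_eqVlt => /orP[/eqP-> _|t_lt1 s_gt0].
  by rewrite !mul1r.
by rewrite ltW // ln1D_concave_lt ?t_gt0.
Qed.

End LnFacts.

Section DivLn1D.
Variable R : realType.
Implicit Types c s t : R.

Lemma div_ln1D_gt0 c s : 0 < c -> 0 < s -> 0 < c / ln (1 + s).
Proof. by move=> c_gt0 s_gt0; rewrite divr_gt0 ?ln1D_gt0. Qed.

Lemma ler_div_ln1D c s s' : 0 < c -> 0 < s -> s <= s' ->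
  c / ln (1 + s') <= c / ln (1 + s).
Proof.
move=> c_gt0 s_gt0 ss'; have s'_gt0 := lt_le_trans s_gt0 ss'.
rewrite ler_pM2l // lef_pV2 ?posrE ?ln1D_gt0 //.
by rewrite ler_ln ?posrE ?addr_gt0 // lerD2l.
Qed.

Lemma ltr_div_ln1D c s s' : 0 < c -> 0 < s -> s < s' ->
  c / ln (1 + s') < c / ln (1 + s).
Proof.
move=> c_gt0 s_gt0 ss'; have s'_gt0 := lt_trans s_gt0 ss'.
rewrite ltr_pM2l // ltf_pV2 ?posrE ?ln1D_gt0 //.
by rewrite ltr_ln ?posrE ?addr_gt0 // ltrD2l.
Qed.

Lemma div_ln1D_scale_le c s t : 0 < c -> 0 < s -> 0 < t <= 1 ->
  c / ln (1 + t * s) <= t^-1 * (c / ln (1 + s)).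
Proof.
move=> c_gt0 s_gt0 /andP[t_gt0 t_le1]; rewrite mulrCA -invfM ler_pM2l //.
rewrite lef_pV2 ?posrE ?mulr_gt0 ?ln1D_gt0 ?mulr_gt0 //.
by rewrite ln1D_concave_le ?t_gt0 ?mulr_gt0.
Qed.

Lemma div_ln1D_scale_lt c s t : 0 < c -> 0 < s -> 0 < t < 1 ->
  c / ln (1 + t * s) < t^-1 * (c / ln (1 + s)).
Proof.
move=> c_gt0 s_gt0 /andP[t_gt0 t_lt1]; rewrite mulrCA -invfM ltr_pM2l //.
rewrite ltf_pV2 ?posrE ?mulr_gt0 ?ln1D_gt0 ?mulr_gt0 //.
by rewrite ln1D_concave_lt ?t_gt0.
Qed.

Lemma continuous_div_ln1D c b t : 0 < b -> 0 < t ->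
  {for t, continuous (fun u : R => c / ln (1 + u * b))}.
Proof.
move=> b_gt0 t_gt0; have tb_gt0 : 0 < t * b by rewrite mulr_gt0.
apply: continuousM; first exact: cst_continuous.
apply: continuousV; first by rewrite gt_eqF // ln1D_gt0.
apply: (continuous_comp _ (continuous_ln _)); last by rewrite addr_gt0.
apply: continuousD; first exact: cst_continuous.
by apply: continuousM; [exact: cvg_id | exact: cst_continuous].
Qed.

End DivLn1D.

Section SumDivLn1D.
Variables (R : realType) (I : finType) (A : {set I}) (c b : I -> R).
Hypotheses (A_neq0 : A != set0) (c_gt0 : forall j, j \in A -> 0 < c j)
  (b_gt0 : forall j, j \in A -> 0 < b j).

Let phi t := \sum_(j in A) c j / ln (1 + t * b j).

Lemma continuous_sum_div_ln1D t : 0 < t -> {for t, continuous phi}.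
Proof.
move=> t_gt0; apply: (@cvg_big _ _ +%R 0 _ add_continuous) => j jA.
exact: continuous_div_ln1D (b_gt0 jA) t_gt0.
Qed.

(* A single user already forces [phi a >= v] once [a b_j <= c_j / v], since
   [ln (1 + s) <= s]. *)
Lemma sum_div_ln1D_ge_near0 v : 0 < v -> exists2 a, 0 < a & v <= phi a.
Proof.
move=> v_gt0; have [j0 j0A] := set0Pn _ A_neq0.
have [c0 b0] := (c_gt0 j0A, b_gt0 j0A).
pose a := c j0 / (b j0 * v).
have a_gt0 : 0 < a by rewrite divr_gt0 ?mulr_gt0.
have ab_gt0 : 0 < a * b j0 by rewrite mulr_gt0.
exists a => //; rewrite /phi (bigD1 j0) //= -[v]addr0.
apply: lerD.
  have -> : v = c j0 / (a * b j0) by rewrite /a; field; rewrite !gt_eqF.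
  rewrite ler_pM2l // lef_pV2 ?posrE ?ln1D_gt0 //.
  by rewrite le_ln1Dx // (lt_trans _ ab_gt0) // ltrN10.
apply: sumr_ge0 => j /andP[jA _].
by rewrite ltW // div_ln1D_gt0 ?c_gt0 // mulr_gt0 ?b_gt0.
Qed.

(* Past [T], every [ln (1 + t b_j)] exceeds [K = (sum_j c_j) / v]. *)
Lemma sum_div_ln1D_le_eventually v : 0 < v ->
  exists T, forall t, T <= t -> phi t <= v.
Proof.
move=> v_gt0; have [j0 j0A] := set0Pn _ A_neq0.
pose K := (\sum_(j in A) c j) / v.
have sc_gt0 : 0 < \sum_(j in A) c j.
  rewrite (bigD1 j0) //= ltr_pwDl ?c_gt0 //.
  by apply: sumr_ge0 => j /andP[jA _]; rewrite ltW ?c_gt0.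
have K_gt0 : 0 < K by rewrite divr_gt0.
exists (\sum_(j in A) expR K / b j) => t Tt.
have -> : v = \sum_(j in A) c j / K.
  by rewrite -mulr_suml /K invf_div mulrCA divff ?mulr1 // gt_eqF.
apply: ler_sum => j jA.
have bj := b_gt0 jA.
have : expR K / b j <= t.
  apply: le_trans Tt; rewrite (bigD1 j) //= lerDl.
  by apply: sumr_ge0 => k /andP[kA _]; rewrite ltW // divr_gt0 ?expR_gt0 ?b_gt0 //.
rewrite ler_pdivrMr // => Kt.
have tb_gt0 : 0 < t * b j by apply: lt_le_trans Kt; rewrite expR_gt0.
rewrite ler_pM2l ?c_gt0 // lef_pV2 ?posrE ?ln1D_gt0 //.
rewrite -[leLHS]expRK ler_ln ?posrE ?expR_gt0 ?addr_gt0 //.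
by rewrite (le_trans Kt) // lerDr.
Qed.

Lemma exists_sum_div_ln1D_eq v : 0 < v -> exists2 t, 0 < t & phi t = v.
Proof.
move=> v_gt0; have [a a_gt0 phi_a] := sum_div_ln1D_ge_near0 v_gt0.
have [T phi_T] := sum_div_ln1D_le_eventually v_gt0.
pose b' := Num.max a T.
have ab' : a <= b' by rewrite le_max lexx.
have cont : {within `[a, b'], continuous phi}%classic.
  apply: continuous_in_subspaceT => u; rewrite in_setE /= in_itv /= => /andP[au _].
  exact: continuous_sum_div_ln1D (lt_le_trans a_gt0 au).
have phi_b' : phi b' <= v by rewrite phi_T // le_max lexx orbT.
have hv : Num.min (phi a) (phi b') <= v <= Num.max (phi a) (phi b').
  by rewrite ge_min le_max phi_a phi_b' orbT.
have [t] := IVT ab' cont hv; rewrite in_itv /= => /andP[a_le_t _] phi_t.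
by exists t => //; exact: lt_le_trans a_le_t.
Qed.

End SumDivLn1D.

Section MonotoneFixpoint.
Variables (R : realType) (I : Type) (T : (I -> R) -> I -> R).
Hypothesis T_ge0 : forall p, (forall k, 0 <= p k) -> forall k, 0 <= T p k.
Hypothesis T_mono : forall p q, (forall k, 0 <= p k) -> (forall k, p k <= q k) ->
  forall k, T p k <= T q k.

(* Knaster--Tarski: the pointwise infimum of the nonnegative [q] with [T q <= q]
   is a fixed point of [T]. *)
Lemma exists_fixpoint_of_supersolution q : (forall k, 0 <= q k) ->
  (forall k, T q k <= q k) -> exists p, (forall k, 0 <= p k) /\ T p = p.
Proof.
move=> q_ge0 Tq_le.
pose S := [set p | (forall k, 0 <= p k) /\ (forall k, T p k <= p k)]%classic.
pose p0 k := inf [set p k | p in S]%classic.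
have S_neq0 k : ([set p k | p in S] !=set0)%classic by exists (q k), q.
have S_lb k : has_lbound [set p k | p in S]%classic.
  by exists 0 => _ [p [p_ge0 _] <-].
have p0_le p : S p -> forall k, p0 k <= p k.
  by move=> Sp k; apply: ge_inf => //; exists p.
have p0_ge0 k : 0 <= p0 k by apply: lb_le_inf => // _ [p [p_ge0 _] <-].
have Tp0_le k : T p0 k <= p0 k.
  apply: lb_le_inf => // _ [p [p_ge0 Tp_le] <-].
  exact: le_trans (T_mono p0_ge0 (p0_le _ (conj p_ge0 Tp_le)) k) (Tp_le k).
have Tp0_ge0 := T_ge0 p0_ge0.
have S_Tp0 : S (T p0) by split; last exact: T_mono Tp0_ge0 Tp0_le.
exists p0; split => //; apply: funext => k.
by apply/le_anti; rewrite Tp0_le p0_le.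
Qed.

End MonotoneFixpoint.

Section Network.
Variables (R : realType) (n m : nat) (J : 'I_n -> {set 'I_m}).
Variables (g : 'I_n -> 'I_m -> R) (sigma2 : R) (r : 'I_n -> 'I_m -> R).
Hypotheses (J_neq0 : forall i, J i != set0) (g_gt0 : forall k j, 0 < g k j).
Hypotheses (sigma2_gt0 : 0 < sigma2) (r_gt0 : forall i j, j \in J i -> 0 < r i j).

Local Notation F := (f J g sigma2).
Local Notation with_power p i t := (@dfwith 'I_n (fun _ => R) p i t).

Definition interference (x p : 'I_n -> R) i j :=
  \sum_(k < n | k != i) p k * g k j * x k + sigma2.

Definition sinr x p i j := p i * g i j / interference x p i j.

Lemma fE x p i : F x r p i = \sum_(j in J i) r i j / ln (1 + sinr x p i j).
Proof. by []. Qed.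

Lemma interference_gt0 x p i j : (forall k, 0 <= p k) -> (forall k, 0 <= x k) ->
  0 < interference x p i j.
Proof.
move=> p_ge0 x_ge0; apply: ltr_wpDl sigma2_gt0.
by apply: sumr_ge0 => k _; rewrite !mulr_ge0 // ltW.
Qed.

Lemma sinr_gt0 x p i j : (forall k, 0 <= p k) -> (forall k, 0 <= x k) -> 0 < p i ->
  0 < sinr x p i j.
Proof. by move=> p_ge0 x_ge0 pi_gt0; rewrite divr_gt0 ?mulr_gt0 ?interference_gt0. Qed.

Lemma ler_interference x y p q i j : (forall k, p k * x k <= q k * y k) ->
  interference x p i j <= interference y q i j.
Proof.
move=> pq; rewrite lerD2r; apply: ler_sum => k _.
by rewrite mulrAC [q k * _ * _]mulrAC ler_pM2r.
Qed.

Lemma ltr_interference x y p q i j k0 : (forall k, p k * x k <= q k * y k) ->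
  k0 != i -> p k0 * x k0 < q k0 * y k0 -> interference x p i j < interference y q i j.
Proof.
move=> pq k0i pq0; rewrite ltrD2r (bigD1 k0) //= [ltRHS](bigD1 k0) //=.
apply: ltr_leD; first by rewrite mulrAC [q k0 * _ * _]mulrAC ltr_pM2r.
by apply: ler_sum => k _; rewrite mulrAC [q k * _ * _]mulrAC ler_pM2r.
Qed.

Lemma ler_sinr x p y q i j : (forall k, 0 <= x k) -> (forall k, 0 <= p k) ->
  (forall k, 0 <= y k) -> (forall k, 0 <= q k) ->
  p i <= q i -> (forall k, q k * y k <= p k * x k) -> sinr x p i j <= sinr y q i j.
Proof.
move=> x_ge0 p_ge0 y_ge0 q_ge0 pq_i qp.
have Ip_gt0 := interference_gt0 i j p_ge0 x_ge0.
have Iq_gt0 := interference_gt0 i j q_ge0 y_ge0.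
apply: (@le_trans _ _ (q i * g i j / interference x p i j)).
  by rewrite ler_pM2r ?invr_gt0 // ler_pM2r.
apply: ler_wpM2l; first by rewrite mulr_ge0 // ltW.
by rewrite lef_pV2 ?posrE // ler_interference.
Qed.

Lemma ltr_sinr x p y q i j k0 : (forall k, 0 <= x k) -> (forall k, 0 <= p k) ->
  (forall k, 0 <= y k) -> (forall k, 0 <= q k) -> 0 < q i ->
  p i <= q i -> (forall k, q k * y k <= p k * x k) ->
  k0 != i -> q k0 * y k0 < p k0 * x k0 -> sinr x p i j < sinr y q i j.
Proof.
move=> x_ge0 p_ge0 y_ge0 q_ge0 qi_gt0 pq_i qp k0i qp0.
have Ip_gt0 := interference_gt0 i j p_ge0 x_ge0.
have Iq_gt0 := interference_gt0 i j q_ge0 y_ge0.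
apply: (@le_lt_trans _ _ (q i * g i j / interference x p i j)).
  by rewrite ler_pM2r ?invr_gt0 // ler_pM2r.
by rewrite ltr_pM2l ?mulr_gt0 // ltf_pV2 // (ltr_interference _ qp k0i).
Qed.

Lemma ler_f_sinr x p y q i :
  (forall j, j \in J i -> 0 < sinr x p i j <= sinr y q i j) ->
  F y r q i <= F x r p i.
Proof.
move=> s_le; rewrite !fE; apply: ler_sum => j jJ.
by have /andP[s_gt0 s_le'] := s_le j jJ; apply: ler_div_ln1D; rewrite ?r_gt0.
Qed.

Let has_user i : has (fun j => j \in J i) (index_enum 'I_m).
Proof.
by have [j jJ] := set0Pn _ (J_neq0 i); apply/hasP; exists j; rewrite ?mem_index_enum.
Qed.

Lemma ltr_f_sinr x p y q i :
  (forall j, j \in J i -> 0 < sinr x p i j < sinr y q i j) ->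
  F y r q i < F x r p i.
Proof.
move=> s_lt; rewrite !fE; apply: ltr_sum => [|j jJ]; first exact: has_user.
by have /andP[s_gt0 s_lt'] := s_lt j jJ; apply: ltr_div_ln1D; rewrite ?r_gt0.
Qed.

Lemma with_power_id p i : with_power p i (p i) = p.
Proof.
by apply: funext => k; case: (eqVneq i k) => [<-|ik]; rewrite ?dfwith_in ?dfwith_out.
Qed.

Lemma sinr_with_power x p i t j :
  sinr x (with_power p i t) i j = t * (g i j / interference x p i j).
Proof.
rewrite /sinr dfwith_in mulrA; congr (_ / (_ + _)).
by apply: eq_bigr => k ki; rewrite dfwith_out // eq_sym.
Qed.

Lemma ltr_f_with_power x p i t t' : (forall k, 0 <= p k) -> (forall k, 0 <= x k) ->
  0 < t -> t < t' -> F x r (with_power p i t') i < F x r (with_power p i t) i.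
Proof.
move=> p_ge0 x_ge0 t_gt0 tt'; apply: ltr_f_sinr => j _.
have b_gt0 : 0 < g i j / interference x p i j by rewrite divr_gt0 ?interference_gt0.
by rewrite !sinr_with_power mulr_gt0 //= ltr_pM2r.
Qed.

Definition best_response x p i :=
  inf [set t | 0 < t /\ F x r (with_power p i t) i <= x i]%classic.

Lemma best_response_le x p i t : 0 < t -> F x r (with_power p i t) i <= x i ->
  best_response x p i <= t.
Proof. by move=> t_gt0 ft; apply: ge_inf => //; exists 0 => u [/ltW]. Qed.

Lemma best_response_spec x p i : (forall k, 0 < x k) -> (forall k, 0 <= p k) ->
  0 < best_response x p i /\ F x r (with_power p i (best_response x p i)) i = x i.
Proof.
move=> x_gt0 p_ge0; have x_ge0 k := ltW (x_gt0 k).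
have b_gt0 j : j \in J i -> 0 < g i j / interference x p i j.
  by move=> _; rewrite divr_gt0 ?interference_gt0.
have [t t_gt0 phi_t] :=
  exists_sum_div_ln1D_eq (J_neq0 i) (r_gt0 (i:=i)) b_gt0 (x_gt0 i).
have ft : F x r (with_power p i t) i = x i.
  by rewrite -[RHS]phi_t fE; apply: eq_bigr => j _; rewrite sinr_with_power.
suff BR_t : best_response x p i = t by rewrite BR_t.
apply/le_anti/andP; split; first by rewrite best_response_le // ft.
apply: lb_le_inf; first by exists t; split; rewrite ?ft.
move=> u [u_gt0 fu]; rewrite leNgt; apply/negP => ut.
by have := lt_le_trans (ltr_f_with_power i p_ge0 x_ge0 u_gt0 ut) fu; rewrite ft ltxx.
Qed.

Lemma best_response_mono x p q i : (forall k, 0 < x k) -> (forall k, 0 <= p k) ->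
  (forall k, p k <= q k) -> best_response x p i <= best_response x q i.
Proof.
move=> x_gt0 p_ge0 pq; have q_ge0 k := le_trans (p_ge0 k) (pq k).
have [c_gt0 fc] := best_response_spec i x_gt0 q_ge0.
have x_ge0 k := ltW (x_gt0 k).
apply: best_response_le => //; rewrite -[leRHS]fc; apply: ler_f_sinr => j _.
have Ip_gt0 := interference_gt0 i j p_ge0 x_ge0.
have Iq_gt0 := interference_gt0 i j q_ge0 x_ge0.
rewrite !sinr_with_power mulr_gt0 ?divr_gt0 //= !ler_pM2l // lef_pV2 ?posrE //.
by apply: ler_interference => k; rewrite ler_pM2r.
Qed.

Lemma implementable_of_supersolution x q : (forall k, 0 < x k) ->
  (forall k, 0 < q k) -> (forall k, F x r q k <= x k) ->
  implementable J g sigma2 x r.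
Proof.
move=> x_gt0 q_gt0 fq_le.
have [|||p [p_ge0 BRp]] := @exists_fixpoint_of_supersolution R _
    (best_response x) _ _ q (fun k => ltW (q_gt0 k)).
- by move=> p p_ge0 k; have [/ltW] := best_response_spec k x_gt0 p_ge0.
- by move=> p p' p_ge0 pp' k; apply: best_response_mono.
- by move=> k; rewrite best_response_le ?with_power_id.
exists p; split => k; have [BR_gt0 fBR] := best_response_spec k x_gt0 p_ge0;
  rewrite BRp in BR_gt0 fBR => //.
by rewrite -[LHS]fBR with_power_id.
Qed.

Lemma sinr_lt_scaled x p q i j a : (forall k, 0 <= x k) -> (forall k, 0 <= p k) ->
  (forall k, 0 <= q k) -> 0 < q i -> 1 < a ->
  (forall k, p k <= a * q k) -> p i = a * q i -> sinr x q i j < sinr x p i j.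
Proof.
move=> x_ge0 p_ge0 q_ge0 qi_gt0 a_gt1 p_le pi_eq; have a_gt0 := lt_trans ltr01 a_gt1.
have Iq_gt0 := interference_gt0 i j q_ge0 x_ge0.
have Ip_lt : interference x p i j < a * interference x q i j.
  rewrite /interference mulrDr mulr_sumr; apply: ler_ltD; last by rewrite ltr_pMl.
  apply: ler_sum => k _; rewrite !mulrA.
  by do 2!apply: ler_wpM2r => //; exact: ltW.
rewrite /sinr pi_eq.
have -> : q i * g i j / interference x q i j =
    a * q i * g i j / (a * interference x q i j).
  by field; rewrite !lt0r_neq0.
rewrite ltr_pM2l ?mulr_gt0 ?g_gt0 // ltf_pV2 // posrE ?mulr_gt0 //.
exact: interference_gt0.
Qed.

Lemma implementable_with_le_supersolution x p q : (forall k, 0 < x k) ->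
  implementable_with J g sigma2 x r p -> (forall k, 0 < q k) ->
  (forall k, F x r q k <= x k) -> forall i, p i <= q i.
Proof.
move=> x_gt0 [p_gt0 fp] q_gt0 fq_le i; rewrite leNgt; apply/negP => qp.
have x_ge0 k := ltW (x_gt0 k); have p_ge0 k := ltW (p_gt0 k).
have q_ge0 k := ltW (q_gt0 k).
have [i1 _ ratio_max] := arg_maxP (fun k => p k / q k) (isT : predT i).
set a := p i1 / q i1 in ratio_max.
have a_gt1 : 1 < a.
  by apply: lt_le_trans (ratio_max i isT); rewrite ltr_pdivlMr // mul1r.
have p_le k : p k <= a * q k by rewrite -ler_pdivrMr ?q_gt0 //; exact: ratio_max.
have pi1 : p i1 = a * q i1 by rewrite /a divfK // lt0r_neq0.
have : F x r p i1 < F x r q i1.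
  apply: ltr_f_sinr => j _; rewrite sinr_gt0 //=.
  exact: sinr_lt_scaled a_gt1 p_le pi1.
by rewrite -fp => /lt_le_trans /(_ (fq_le i1)); rewrite ltxx.
Qed.

(* Powers under which load [x'] yields the same received powers as [p] under [x]. *)
Definition rescaled_power (x x' p : 'I_n -> R) k := p k * x k / x' k.

Lemma rescaled_power_received x x' p k : x' k != 0 ->
  rescaled_power x x' p k * x' k = p k * x k.
Proof. by move=> x_neq0; rewrite /rescaled_power divfK. Qed.

Lemma sinr_rescaled x x' p i j : (forall k, 0 < x' k) ->
  sinr x' (rescaled_power x x' p) i j = x i / x' i * sinr x p i j.
Proof.
move=> x'_gt0; have I_eq : interference x' (rescaled_power x x' p) i j =
    interference x p i j.
  congr (_ + _); apply: eq_bigr => k _.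
  by rewrite mulrAC rescaled_power_received ?lt0r_neq0 // mulrAC.
by rewrite /sinr I_eq /rescaled_power; ring.
Qed.

Lemma f_rescaled_le x x' p k : (forall k, 0 < x k) -> (forall k, x k <= x' k) ->
  implementable_with J g sigma2 x r p -> F x' r (rescaled_power x x' p) k <= x' k.
Proof.
move=> x_gt0 x_le [p_gt0 fp]; have x'_gt0 k' := lt_le_trans (x_gt0 k') (x_le k').
have t_gt0 : 0 < x k / x' k <= 1 by rewrite divr_gt0 //= ler_pdivrMr // mul1r.
have -> : x' k = (x k / x' k)^-1 * F x r p k by rewrite -fp invf_div divfK ?lt0r_neq0.
rewrite !fE mulr_sumr; apply: ler_sum => j jJ; rewrite sinr_rescaled //.
by rewrite div_ln1D_scale_le ?r_gt0 ?sinr_gt0 // => k'; exact: ltW.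
Qed.

Lemma f_rescaled_lt x x' p k : (forall k, 0 < x k) -> (forall k, x k <= x' k) ->
  x k < x' k -> implementable_with J g sigma2 x r p ->
  F x' r (rescaled_power x x' p) k < x' k.
Proof.
move=> x_gt0 x_le x_lt [p_gt0 fp]; have x'_gt0 k' := lt_le_trans (x_gt0 k') (x_le k').
have t_gt0 : 0 < x k / x' k < 1 by rewrite divr_gt0 //= ltr_pdivrMr // mul1r.
have -> : x' k = (x k / x' k)^-1 * F x r p k by rewrite -fp invf_div divfK ?lt0r_neq0.
rewrite !fE mulr_sumr; apply: ltr_sum => [|j jJ]; first exact: has_user.
by rewrite sinr_rescaled // div_ln1D_scale_lt ?r_gt0 ?sinr_gt0 // => k'; exact: ltW.
Qed.

Lemma power_lt_of_load_increase x x' p p' i0 : (forall k, 0 < x k) ->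
  (forall k, x k <= x' k) -> x i0 < x' i0 ->
  implementable_with J g sigma2 x r p -> implementable_with J g sigma2 x' r p' ->
  forall i, p' i < p i.
Proof.
move=> x_gt0 x_le x_lt impl_p [p'_gt0 fp'] i.
have x'_gt0 k := lt_le_trans (x_gt0 k) (x_le k).
have [p_gt0 fp] := impl_p.
have x_ge0 k := ltW (x_gt0 k); have x'_ge0 k := ltW (x'_gt0 k).
have p_ge0 k := ltW (p_gt0 k); have p'_ge0 k := ltW (p'_gt0 k).
pose pp := rescaled_power x x' p.
have pp_gt0 k : 0 < pp k by rewrite !divr_gt0 ?mulr_gt0.
have pp_ge0 k := ltW (pp_gt0 k).
have pp_le_p k : pp k <= p k by rewrite ler_pdivrMr // ler_pM2l.
have pp_received k : pp k * x' k = p k * x k.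
  by rewrite rescaled_power_received ?lt0r_neq0.
have p'_le_pp := implementable_with_le_supersolution x'_gt0 (conj p'_gt0 fp') pp_gt0
  (fun k => f_rescaled_le k x_gt0 x_le impl_p).
have p'_lt_pp : p' i0 < pp i0.
  rewrite lt_neqAle p'_le_pp andbT; apply/eqP => p'_eq.
  have f_le : F x' r p' i0 <= F x' r pp i0.
    apply: ler_f_sinr => j _; rewrite sinr_gt0 //= ler_sinr ?p'_eq //.
    by move=> k; rewrite ler_pM2r.
  have := le_lt_trans f_le (f_rescaled_lt x_gt0 x_le x_lt impl_p).
  by rewrite -fp' ltxx.
have [<-|i0_neq_i] := eqVneq i0 i; first exact: lt_le_trans p'_lt_pp (pp_le_p i0).
(* If [p i <= p' i], station [i] would see less interference under [(x', p')]
   than under [(x, p)], hence carry strictly less load: [x' i < x i]. *)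
rewrite ltNge; apply/negP => p_le_p'.
have : F x' r p' i < F x r p i.
  apply: ltr_f_sinr => j _; rewrite sinr_gt0 //=.
  apply: (@ltr_sinr x p x' p' i j i0) => //.
    by move=> k; rewrite -pp_received ler_pM2r.
  by rewrite -pp_received ltr_pM2r.
by rewrite -fp' -fp => /lt_le_trans /(_ (x_le i)); rewrite ltxx.
Qed.

End Network.

Theorem theorem3 (R : realType) (n m : nat)
  (J : 'I_n -> {set 'I_m}) (g : 'I_n -> 'I_m -> R) (sigma2 : R)
  (r : 'I_n -> 'I_m -> R) (x x' : 'I_n -> R) :
  (forall i, J i != set0) ->
  (forall i k, i != k -> [disjoint J i & J k]) ->
  (forall k j, 0 < g k j) ->
  0 < sigma2 ->
  (forall i j, j \in J i -> 0 < r i j) ->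
  satisfiable J g r ->
  (forall i, 0 < x i) ->
  (forall i, x i <= x' i) ->
  x' <> x ->
  implementable J g sigma2 x r ->
  implementable J g sigma2 x' r /\
  (forall p p', implementable_with J g sigma2 x r p ->
               implementable_with J g sigma2 x' r p' ->
               forall i, p' i < p i).
Proof.
move=> J_neq0 _ g_gt0 sigma2_gt0 r_gt0 _ x_gt0 x_le x'_neq [p impl_p].
have [i0 x_lt] : exists i0, x i0 < x' i0.
  apply/existsP; apply: contra_notT x'_neq => /existsPn x_ge.
  by apply: funext => i; apply/le_anti; rewrite x_le leNgt x_ge.
have x'_gt0 k := lt_le_trans (x_gt0 k) (x_le k).
split; last by move=> p1 p1'; exact: power_lt_of_load_increase x_lt.
apply: (implementable_of_supersolution J_neq0 g_gt0 sigma2_gt0 r_gt0 x'_gt0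
  (q := rescaled_power x x' p)) => [k|k].
  by have [p_gt0 _] := impl_p; rewrite !divr_gt0 ?mulr_gt0.
exact: f_rescaled_le.
Qed.
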